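(* Let $\beta_1,\dots,\beta_N\in\mathbb R$ satisfy $(d-1)\sum_i\beta_i^2+(\sum_i\beta_i)^2=1$. Then for every $1\le i\le N$: (i) $\widetilde C_\beta\,\big(\omega_{(0,i)}\otimes I^{\otimes(N-1)}\big)=\frac1{(N-1)!}\sum_{a=1}^N\sum_{\sigma\in\Sigma_{a,i}}\beta_a\big((d-1)\beta_i+\sum_{b=1}^N\beta_b\big)\Pi_\sigma^\Gamma$; (ii) $\mathrm{Tr}\big[C_\beta\,(\omega_{(0,i)}\otimes I^{\otimes(N-1)})\big]=d\big((d-1)\beta_i+\sum_{j=1}^N\beta_j\big)^2$.
   Context: Fix $d\ge2$, $N\ge1$. Let $|\Omega\rangle=\sum_{i=1}^d|i\rangle\otimes|i\rangle$, $\omega=|\Omega\rangle\langle\Omega|$; tensor factors of $(\mathbb C^d)^{\otimes(N+1)}$ are labelled $0,\dots,N$ and $\omega_{(0,i)}\otimes I^{\otimes(N-1)}$ acts as $\omega$ on factors $0,i$ and identity elsewhere. For a permutation $\sigma$ of $\{0,\dots,N\}$, $\Pi_\sigma(v_0\otimes\cdots\otimes v_N)=v_{\sigma^{-1}(0)}\otimes\cdots\otimes v_{\sigma^{-1}(N)}$, $\Pi_\sigma^\Gamma$ is its partial transpose on factor $0$, and $\Sigma_{a,b}=\{\sigma:\sigma(0)=a,\sigma(b)=0\}$. $\widetilde C_\beta=\sum_{1\le a,b\le N}\sum_{\sigma\in\Sigma_{a,b}}\frac{\beta_a\beta_b}{(N-1)!}\Pi_\sigma^\Gamma$ and $C_\beta=\frac{d}{\binom{N+d-1}{N}}\frac{N+d-1}{N}\widetilde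 C_\beta$. *)

(* Operators on (C^d)^{\otimes (N+1)} are represented by their
   matrix entries in the computational basis: a basis vector is a tuple
   x : {ffun 'I_N.+1 -> 'I_d} (factor k carries basis index x k), and an
   operator is a function  op := basis -> basis -> R  (entry <y| A |x>). *)
From HB Require Import structures.
From mathcomp Require Import all_boot all_order all_algebra all_fingroup.
Set Implicit Arguments. Unset Strict Implicit. Unset Printing Implicit Defensive.
Import Order.TTheory GRing.Theory Num.Theory.
Local Open Scope ring_scope.

Definition basis (d N : nat) := {ffun 'I_N.+1 -> 'I_d}.
Definition op (R : Type) (d N : nat) := basis d N -> basis d N -> R.

(* tensor factor i (1 <= i <= N) for i : 'I_N, i.e. factor i.+1 *)
Definition fac (N : nat) (i : 'I_N) : 'I_N.+1 := lift ord0 i.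

Section Ops.
Variables (R : fieldType) (d N : nat).

Definition opmul (A B : op R d N) : op R d N :=
  fun y x => \sum_(z : basis d N) A y z * B z x.

Definition optr (A : op R d N) : R := \sum_(x : basis d N) A x x.

(* Pi_sigma (v_0 (x) ... (x) v_N) = v_{s^-1 0} (x) ... (x) v_{s^-1 N};
   on basis vectors Pi_s e_x = e_y with y k = x (s^-1 k), i.e. y (s k) = x k. *)
Definition Pi (s : {perm 'I_N.+1}) : op R d N :=
  fun y x => if [forall k, y (s k) == x k] then 1 else 0.

(* partial transpose on factor 0: <y|A^Gamma|x> = <y'|A|x'> where y' = y with
   factor 0 replaced by x 0 and x' = x with factor 0 replaced by y 0. *)
Definition set_fac0 (x : basis d N) (c : 'I_d) : basis d N :=
  [ffun k => if k == ord0 then c else x k].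

Definition PiG (s : {perm 'I_N.+1}) : op R d N :=
  fun y x => Pi s (set_fac0 y (x ord0)) (set_fac0 x (y ord0)).

(* omega = |Omega><Omega| with |Omega> = sum_j |j>|j>, acting on factors 0 and
   i, identity elsewhere *)
Definition omega0 (i : 'I_N.+1) : op R d N :=
  fun y x => if [&& y ord0 == y i, x ord0 == x i &
                 [forall k, (k != ord0) && (k != i) ==> (y k == x k)]]
             then 1 else 0.

Definition inSigma (s : {perm 'I_N.+1}) (a b : 'I_N.+1) : bool :=
  (s ord0 == a) && (s b == ord0).

(* beta a  stands for beta_{a+1} *)
Definition Ctilde (beta : 'I_N -> R) : op R d N :=
  fun y x => \sum_(a < N) \sum_(b < N)
     \sum_(s : {perm 'I_N.+1} | inSigma s (fac a) (fac b))
        (beta a * beta b / (N.-1)`!%:R) * PiG s y x.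

Definition Cbeta (beta : 'I_N -> R) : op R d N :=
  fun y x => (d%:R / 'C(N + d - 1, N)%:R) * ((N + d - 1)%:R / N%:R)
             * Ctilde beta y x.

End Ops.

Arguments opmul {R d N} A B y x.
Arguments optr {R d N} A.
Arguments PiG {R d N} s y x.
Arguments omega0 {R d N} i y x.
Arguments Ctilde {R} d {N} beta y x.
Arguments Cbeta {R} d {N} beta y x.

From HB Require Import structures.
From mathcomp Require Import all_boot all_order all_algebra all_fingroup.
From mathcomp Require Import ring.
Import Order.TTheory GRing.Theory Num.Theory.
Set Implicit Arguments. Unset Strict Implicit. Unset Printing Implicit Defensive.

(* Right multiplication by omega_(0,i) sends Pi_s^Gamma, for s in Sigma_(a,b),
   to d Pi_s^Gamma when b = i (a loop closes) and to Pi_((b i) s)^Gamma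
   otherwise, where (b i) s lies in Sigma_(a,i); collecting terms gives (i).
   For (ii), tr Pi_s^Gamma = tr Pi_s is the number d^c(s) of d-colourings of
   {0,...,N} constant on the cycles of s.  Composing with a transposition that
   merges two cycles divides this count by d, so summing over the permutations
   supported in a set P of size n gives d^(N+1-n) d(d+1)...(d+n-1).  Writing
   s in Sigma_(a,i) as h (0 a) with h 0 = 0 and h i = a yields
   sum_(s in Sigma_(a,i)) d^c(s) = d^[a = i] d(d+1)...(d+N-2), and the
   prefactor of C_beta is exactly d (N-1)! / (d(d+1)...(d+N-2)). *)

Section Colorings.
Variables (T : finType) (d : nat).
Implicit Types (s h : {perm T}) (P : {set T}) (x : {ffun T -> 'I_d}).

Definition fixed_colorings s : {set {ffun T -> 'I_d}} :=
  [set x : {ffun T -> 'I_d} | [forall k, x (s k) == x k]].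

Definition fixed_colorings_sum P : nat :=
  \sum_(s | perm_on P s) #|fixed_colorings s|.

Definition recolor x p c : {ffun T -> 'I_d} :=
  [ffun k => if k == p then c else x k].

Lemma perm_onP P s : reflect (forall z, z \notin P -> s z = z) (perm_on P s).
Proof.
apply: (iffP subsetP) => sP z; last by rewrite inE; apply: contraR => /sP ->.
by move=> zP; apply/eqP; apply: contraNT zP; apply: sP.
Qed.

Lemma coloring_tperm x p q z : x p = x q -> x (tperm p q z) = x z.
Proof. by move=> xpq; case: tpermP => [->|->|]. Qed.

Lemma fixed_colorings_mul_tperm s p q : s p = p ->
  fixed_colorings (s * tperm p q) =
  fixed_colorings s :&: [set x : {ffun T -> 'I_d} | x p == x q].
Proof.
move=> sp; apply/setP=> x; rewrite !inE; apply/idP/andP.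
- move/forallP=> fixx.
  have xpq : x p = x q by have := fixx p; rewrite permM sp tpermL => /eqP.
  split; last exact/eqP.
  by apply/forallP=> k; have := fixx k; rewrite permM coloring_tperm.
- case=> /forallP fixx /eqP xpq; apply/forallP=> k.
  by rewrite permM coloring_tperm.
Qed.

Lemma recolor_fixed s x p c : s p = p ->
  x \in fixed_colorings s -> recolor x p c \in fixed_colorings s.
Proof.
move=> sp; rewrite !inE => /forallP fixx; apply/forallP=> k; rewrite !ffunE.
have [->|kp] := eqVneq k p; first by rewrite sp eqxx.
by rewrite -{1}sp (inj_eq perm_inj) (negbTE kp).
Qed.

(* Recolouring p gives a bijection between the s-fixed colourings and the
   pairs (colour of p, s-fixed colouring with x p = x q). *)
Lemma card_fixed_colorings_mul_tperm s p q : s p = p -> p != q ->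
  d * #|fixed_colorings (s * tperm p q)| = #|fixed_colorings s|.
Proof.
move=> sp pq; rewrite fixed_colorings_mul_tperm //.
set A := _ :&: _.
pose F x := (x p, recolor x p (x q)).
have F_inj : injective F.
  move=> x z [xzp /ffunP xz]; apply/ffunP=> k; have := xz k; rewrite !ffunE.
  by case: eqP => [->|//]; rewrite xzp.
rewrite -[RHS](card_imset _ F_inj).
have -> : F @: fixed_colorings s = setX [set: 'I_d] A.
  apply/setP=> [[c z]]; rewrite !inE /=; apply/imsetP/andP.
  - case=> x xF; rewrite /F => -[_ ->]; split.
      by move: (recolor_fixed (x q) sp xF); rewrite inE.
    by rewrite !ffunE eqxx; case: ifP.
  - case=> zF /eqP zpq; exists (recolor z p c).
      by apply: recolor_fixed; rewrite ?inE.
    rewrite /F /recolor !ffunE eqxx eq_sym (negbTE pq); congr pair.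
    by apply/ffunP=> k; rewrite !ffunE; case: eqP => [->|].
by rewrite cardsX cardsT card_ord.
Qed.

Lemma sum_perm_on_eq P p q (F : {perm T} -> nat) : p \in P -> q \in P ->
  \sum_(s | perm_on P s && (s p == q)) F s =
  \sum_(h | perm_on (P :\ p) h) F (h * tperm p q)%g.
Proof.
move=> pP qP; rewrite (reindex_inj (mulIg (tperm p q))); apply: eq_bigl => h /=.
have tperm_out z : z \notin P -> tperm p q z = z.
  by move=> zP; apply: tpermD; apply: contraNneq zP => <-.
apply/andP/perm_onP => [[/perm_onP hton]|hon].
  rewrite permM => /eqP htpq z; rewrite !inE negb_and negbK.
  have hp : h p = p by apply: (can_inj (tpermK p q)); rewrite htpq tpermL.
  case/orP => [/eqP -> //|zP].
  by apply: (can_inj (tpermK p q)); rewrite -permM hton // tperm_out.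
have hp : h p = p by apply: hon; rewrite !inE eqxx.
rewrite permM hp tpermL; split=> //; apply/perm_onP => z zP.
by rewrite permM hon ?tperm_out // !inE (negbTE zP) andbF.
Qed.

Lemma fixed_colorings_sum_rec P p : p \in P ->
  d * fixed_colorings_sum P = (d + #|P|.-1) * fixed_colorings_sum (P :\ p).
Proof.
move=> pP; rewrite /fixed_colorings_sum.
rewrite (partition_big (fun s => s p) (mem P)) => [|s sP].
  2: by rewrite inE perm_closed.
rewrite (bigD1 p) //= sum_perm_on_eq //.
under eq_bigr do rewrite tperm1 mulg1.
rewrite mulnDr mulnDl; congr (_ + _).
rewrite big_distrr /= (eq_bigr (fun=> fixed_colorings_sum (P :\ p))) => [|q /andP[qP qp]].
  rewrite sum_nat_const (cardsD1 p P) pP; congr (_ * _).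
  by apply: eq_card => q; rewrite !inE andbC.
rewrite sum_perm_on_eq // big_distrr /=; apply: eq_bigr => h /perm_onP hon.
by rewrite card_fixed_colorings_mul_tperm 1?eq_sym // hon // !inE eqxx.
Qed.

Lemma fixed_colorings_sumE P : 0 < d ->
  fixed_colorings_sum P = d ^ (#|T| - #|P|) * \prod_(k < #|P|) (d + k).
Proof.
move=> d_gt0; have [n cardP] : {n | #|P| = n} by exists #|P|.
rewrite cardP; elim: n P cardP => [|n IH] P cardP.
  have -> : P = set0 by apply/eqP; rewrite -cards_eq0 cardP.
  rewrite /fixed_colorings_sum big_ord0 muln1 subn0 (big_pred1 1%g) => [|s].
    have -> : fixed_colorings 1 = setT.
      by apply/setP=> x; rewrite !inE; apply/forallP=> k; rewrite perm1.
    by rewrite cardsT card_ffun card_ord.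
  by apply/idP/eqP => [/perm_on_id -> //|->]; rewrite ?cards0 // perm_on1.
have [p pP] : exists p, p \in P by apply/set0Pn; rewrite -card_gt0 cardP.
have cardPp : #|P :\ p| = n by move: cardP; rewrite (cardsD1 p) pP => -[].
have n_lt : n < #|T| by rewrite -cardP max_card.
apply/eqP; rewrite -(eqn_pmul2l d_gt0) (fixed_colorings_sum_rec pP) IH // cardP.
by rewrite -(subnSK n_lt) expnS big_ord_recr /=; apply/eqP; ring.
Qed.

End Colorings.

Lemma sum_Sigma_perm_on N (a i : 'I_N.+1) (F : {perm 'I_N.+1} -> nat) :
  a != ord0 ->
  \sum_(s | inSigma s a i) F s =
  \sum_(h | perm_on [set~ ord0] h && (h i == a)) F (h * tperm ord0 a)%g.
Proof.
move=> a0; rewrite (reindex_inj (mulIg (tperm ord0 a))); apply: eq_bigl => h /=.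
rewrite /inSigma !permM !(can2_eq (tpermK _ _) (tpermK _ _)) tpermL tpermR.
congr andb.
apply/eqP/perm_onP => [h0 z|fixh]; first by rewrite !inE negbK => /eqP ->.
by apply: fixh; rewrite !inE eqxx.
Qed.

Lemma sum_Sigma_fixed_colorings d N (a i : 'I_N.+1) :
  0 < d -> a != ord0 -> i != ord0 ->
  \sum_(s | inSigma s a i) #|fixed_colorings d s| =
  d ^ (a == i) * \prod_(k < N.-1) (d + k).
Proof.
move=> d_gt0 a0 i0; have N_gt0 : 0 < N by case: N a i a0 i0 => [[[]]|].
set P := [set~ ord0] :\ i.
have cardP : #|P| = N.-1.
  move: (cardsD1 i [set~ ord0]); rewrite cardsC1 card_ord !inE i0 add1n.
  by move=> /(congr1 predn) ->.
have sumP : fixed_colorings_sum d P = d ^ 2 * \prod_(k < N.-1) (d + k).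
  rewrite fixed_colorings_sumE // cardP card_ord; congr (d ^ _ * _).
  by move: N_gt0; case: (N) => // n _; rewrite -addn2 addKn.
have dT : d * \sum_(s | inSigma s a i) #|fixed_colorings d s| =
    \sum_(h | perm_on P h) #|fixed_colorings d (h * tperm i a)%g|.
  rewrite sum_Sigma_perm_on // big_distrr /=.
  rewrite -(@sum_perm_on_eq _ _ _ _ (fun h => #|fixed_colorings d h|)) ?inE //.
  apply: eq_bigr => h /andP[/perm_onP fixh _].
  by rewrite card_fixed_colorings_mul_tperm 1?eq_sym // fixh // !inE eqxx.
apply/eqP; rewrite -(eqn_pmul2l d_gt0) dT; have [<-|ai] := eqVneq a i.
  under eq_bigr do rewrite tperm1 mulg1.
  by rewrite -/(fixed_colorings_sum d P) sumP mulnA -expnS.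
rewrite expn0 mul1n -(eqn_pmul2l d_gt0) big_distrr /= mulnA mulnn.
under eq_bigr => h /perm_onP fixh do
  rewrite card_fixed_colorings_mul_tperm 1?eq_sym ?fixh ?inE ?eqxx //.
by rewrite -/(fixed_colorings_sum d P) sumP.
Qed.

Lemma prod_addn_ffact d m : (\prod_(k < m) (d.+1 + k) = (d + m) ^_ m)%N.
Proof.
elim: m => [|m IH]; first by rewrite big_ord0 ffactn0.
by rewrite big_ord_recr /= IH addnS ffactSS mulnC addSn.
Qed.

Local Open Scope ring_scope.

Lemma fac_neq0 N (i : 'I_N) : fac i != ord0.
Proof. by rewrite /fac eq_sym neq_lift. Qed.

Lemma eq_fac N (a b : 'I_N) : (fac a == fac b) = (a == b).
Proof. by rewrite /fac (inj_eq (@lift_inj _ ord0)). Qed.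

Section PartialTranspose.
Variables (R : fieldType) (d N : nat).
Implicit Types (s : {perm 'I_N.+1}) (f : 'I_N.+1) (x y z : basis d N).

Definition set_fac0f x f c : basis d N :=
  [ffun k => if (k == ord0) || (k == f) then c else x k].

Lemma opmul_omega0 (A : op R d N) f y x : f != ord0 ->
  opmul A (omega0 f) y x =
  if x ord0 == x f then \sum_(c : 'I_d) A y (set_fac0f x f c) else 0.
Proof.
move=> f0; rewrite /opmul /omega0; have [xf|] := eqVneq (x ord0) (x f); last first.
  by move=> _; rewrite big1 // => z _; rewrite andbF mulr0.
have g_inj : injective (set_fac0f x f).
  by move=> c c' /(congr1 (fun z : basis d N => z ord0)); rewrite !ffunE eqxx.
rewrite -(big_imset (A y) (in2W g_inj)) /= [RHS]big_mkcond /=; apply: eq_bigr => z _.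
set C := [&& _ & _]; suff -> : C = (z \in [set set_fac0f x f c | c : 'I_d]).
  by case: (_ \in _); rewrite ?mulr1 ?mulr0.
apply/andP/imsetP => [[/eqP zf /forallP zx]|[c _ ->]].
  exists (z ord0) => //; apply/ffunP => k; rewrite ffunE.
  case: ifP => [/orP[]/eqP -> //|/negbT]; rewrite negb_or => kk.
  exact/eqP/(implyP (zx k)).
rewrite !ffunE !eqxx orbT; split=> //; apply/forallP => k; apply/implyP.
by rewrite ffunE -negb_or => /negbTE ->.
Qed.

Lemma PiGE s f y z : s f = ord0 -> f != ord0 ->
  PiG s y z = (if [&& y (s ord0) == y ord0, z ord0 == z f &
     [forall k, (k != ord0) && (k != f) ==> (y (s k) == z k)]] then 1 else 0 : R).
Proof.
move=> sf f0.
have s0 : s ord0 != ord0 by rewrite -[X in _ != X]sf (inj_eq perm_inj) eq_sym.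
have sk0 k : k != f -> s k != ord0 by rewrite -sf (inj_eq perm_inj).
rewrite /PiG /Pi; congr (if _ then _ else _).
apply/forallP/and3P => [fixy|[y0 zf /forallP fixy] k].
- have := fixy ord0; rewrite !ffunE (negbTE s0) eqxx => ->.
  have := fixy f; rewrite sf !ffunE eqxx (negbTE f0) => ->.
  split=> //; apply/forallP => k; apply/implyP => /andP[k0 kf].
  by have := fixy k; rewrite !ffunE (negbTE k0) (negbTE (sk0 k kf)).
- rewrite !ffunE; have [-> /=|k0] := eqVneq k ord0; first by rewrite (negbTE s0).
  have [->|kf] := eqVneq k f; first by rewrite sf eqxx.
  by rewrite (negbTE (sk0 k kf)) (implyP (fixy k)) ?k0.
Qed.

Lemma opmul_PiG_omega0 s f y x : s f = ord0 -> f != ord0 ->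
  opmul (PiG s) (omega0 f) y x = d%:R * PiG s y x :> R.
Proof.
move=> sf f0; have PiGs := PiGE _ _ sf f0; rewrite opmul_omega0 //.
have [xf|xf] := eqVneq (x ord0) (x f); last by rewrite PiGs (negbTE xf) andbF mulr0.
have PiG_set c : PiG s y (set_fac0f x f c) = PiG s y x :> R.
  rewrite !PiGs /set_fac0f !ffunE !eqxx orbT xf /= !eqxx.
  congr (if _ && _ then _ else _); apply: eq_forallb => k; rewrite ffunE.
  by case: ifP => [/orP[]/eqP->|//]; rewrite eqxx /= ?andbF.
by under eq_bigr do rewrite PiG_set; rewrite sumr_const card_ord mulr_natl.
Qed.

Lemma opmul_PiG_omega0_tperm s f i y x :
  s f = ord0 -> f != ord0 -> i != ord0 -> f != i ->
  opmul (PiG s) (omega0 i) y x = PiG (tperm f i * s) y x :> R.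
Proof.
move=> sf f0 i0 fi; set t := tperm f i; have PiGs := PiGE _ _ sf f0.
have tsi : (t * s)%g i = ord0 by rewrite permM tpermR.
have tsE k : k != f -> k != i -> (t * s)%g k = s k.
  by move=> kf ki; rewrite permM tpermD // eq_sym.
have gE c k : k != ord0 -> k != i -> set_fac0f x i c k = x k.
  by move=> k0 ki; rewrite ffunE (negbTE k0) (negbTE ki).
have g0 c : set_fac0f x i c ord0 = c by rewrite ffunE eqxx.
rewrite opmul_omega0 // (PiGE _ _ tsi i0) tsE // 1?eq_sym //.
have [xi|_] := eqVneq (x ord0) (x i); last by rewrite andbF.
rewrite (bigD1 (x f)) //= big1 ?addr0 => [|c cxf]; last first.
  by rewrite PiGs g0 (gE _ f) // (negbTE cxf) andbF.
rewrite PiGs g0 (gE _ f) // eqxx /=; congr (if _ && _ then _ else _).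
have gi : set_fac0f x i (x f) i = x f by rewrite ffunE eqxx orbT.
apply/forallP/forallP => fixy k; apply/implyP => /andP[k0 kk].
- have [->|kf] := eqVneq k f.
    by rewrite permM tpermL -gi (implyP (fixy i)) // i0 eq_sym.
  by rewrite tsE // -(gE (x f)) // (implyP (fixy k)) ?k0.
- have [->|ki] := eqVneq k i.
    by rewrite gi; move: (implyP (fixy f)); rewrite permM tpermL f0 fi; apply.
  by rewrite gE // -tsE // (implyP (fixy k)) ?k0.
Qed.

End PartialTranspose.

Lemma sum_Sigma_tperm (V : nmodType) N (a b i : 'I_N.+1)
    (G : {perm 'I_N.+1} -> V) :
  b != ord0 -> i != ord0 ->
  \sum_(s | inSigma s a b) G (tperm b i * s)%g = \sum_(s | inSigma s a i) G s.
Proof.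
move=> b0 i0; rewrite [RHS](reindex_inj (mulgI (tperm b i))) /=.
by apply: eq_bigl => s; rewrite /inSigma !permM tpermR tpermD.
Qed.

Lemma Ctilde_omega0E (R : fieldType) d N (beta : 'I_N -> R) (i : 'I_N)
    (y x : basis d N) :
  opmul (Ctilde d beta) (omega0 (fac i)) y x =
  \sum_(a < N) \sum_(s : {perm 'I_N.+1} | inSigma s (fac a) (fac i))
    ((N.-1)`!%:R)^-1 *
    (beta a * ((d%:R - 1) * beta i + \sum_(b < N) beta b)) * PiG s y x.
Proof.
set F := ((N.-1)`!%:R : R).
have -> : opmul (Ctilde d beta) (omega0 (fac i)) y x =
    \sum_(a < N) \sum_(b < N) \sum_(s | inSigma s (fac a) (fac b))
      beta a * beta b / F * opmul (PiG s) (omega0 (fac i)) y x.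
  rewrite /opmul /Ctilde; under eq_bigr do rewrite mulr_suml.
  rewrite exchange_big; apply: eq_bigr => a _ /=.
  under eq_bigr do rewrite mulr_suml.
  rewrite exchange_big; apply: eq_bigr => b _ /=.
  under eq_bigr do rewrite mulr_suml.
  rewrite exchange_big; apply: eq_bigr => s _ /=.
  by rewrite mulr_sumr; apply: eq_bigr => z _; rewrite mulrA.
apply: eq_bigr => a _; rewrite (bigD1 i) //=.
under eq_bigr => s /andP[_ /eqP si] do rewrite opmul_PiG_omega0 ?fac_neq0 //.
rewrite (eq_bigr (fun b => \sum_(s | inSigma s (fac a) (fac i))
    beta a * beta b / F * PiG s y x)) => [|b bi]; last first.
  rewrite -(sum_Sigma_tperm _ (fun s => beta a * beta b / F * PiG s y x)
              (fac_neq0 b) (fac_neq0 i)).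
  apply: eq_bigr => s /andP[_ /eqP sb].
  by congr (_ * _); apply: opmul_PiG_omega0_tperm; rewrite ?fac_neq0 ?eq_fac.
rewrite exchange_big -big_split /=; apply: eq_bigr => s _.
by rewrite -!mulr_suml -mulr_sumr [in RHS](bigD1 i) //=; ring.
Qed.

Lemma optr_PiG (R : fieldType) d N (s : {perm 'I_N.+1}) :
  optr (PiG s : op R d N) = #|fixed_colorings d s|%:R.
Proof.
rewrite /optr -sumr_const [RHS]big_mkcond /=; apply: eq_bigr => x _.
rewrite /PiG; have -> : set_fac0 x (x ord0) = x.
  by apply/ffunP=> k; rewrite ffunE; case: eqP => [->|].
by rewrite /Pi inE.
Qed.

Lemma optr_Ctilde_omega0 (R : fieldType) d N (beta : 'I_N -> R) (i : 'I_N) :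
  (0 < d)%N ->
  optr (opmul (Ctilde d beta) (omega0 (fac i))) =
  ((N.-1)`!%:R)^-1 * (\prod_(k < N.-1) (d + k))%:R *
  ((d%:R - 1) * beta i + \sum_(j < N) beta j) ^+ 2.
Proof.
move=> d_gt0; set F := (N.-1)`!%:R; set Pi := \prod_(k < N.-1) _.
set E := (d%:R - 1) * beta i + _.
rewrite /optr; under eq_bigr do rewrite Ctilde_omega0E.
rewrite exchange_big (eq_bigr (fun a => F^-1 * (beta a * E) * (d ^ (a == i) * Pi)%:R)).
  rewrite (bigD1 i) //= eqxx; under eq_bigr => a ai do rewrite (negbTE ai) expn0 mul1n.
  rewrite -mulr_suml -mulr_sumr -mulr_suml natrM expn1.
  transitivity (F^-1 * Pi%:R * E * (d%:R * beta i + \sum_(a < N | a != i) beta a)).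
    by ring.
  by rewrite /E (bigD1 i) //=; ring.
move=> a _; rewrite exchange_big /= -eq_fac.
rewrite -(sum_Sigma_fixed_colorings d_gt0) ?fac_neq0 //.
rewrite natr_sum mulr_sumr; apply: eq_bigr => s _.
by rewrite -mulr_sumr; congr (_ * _); exact: optr_PiG.
Qed.

Lemma Cbeta_normalization (R : numFieldType) d N : (0 < d)%N -> (0 < N)%N ->
  d%:R / 'C(N + d - 1, N)%:R * ((N + d - 1)%:R / N%:R) *
  (((N.-1)`!%:R)^-1 * (\prod_(k < N.-1) (d + k))%:R) = d%:R :> R.
Proof.
move=> d_gt0 N_gt0.
have rising : ((N + d - 1) * \prod_(k < N.-1) (d + k) =
                'C(N + d - 1, N) * N * (N.-1)`!)%N.
  case: N N_gt0 => // n _; case: d d_gt0 => // d _.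
  rewrite addnS subn1 /= prod_addn_ffact -mulnA -factS bin_ffact.
  by rewrite addSn addnC ffactSS.
have C_neq0 : 'C(N + d - 1, N)%:R != 0 :> R.
  by rewrite pnatr_eq0 -lt0n bin_gt0 -addnBA // leq_addr.
have N_neq0 : N%:R != 0 :> R by rewrite pnatr_eq0 -lt0n.
have F_neq0 : (N.-1)`!%:R != 0 :> R by rewrite pnatr_eq0 -lt0n fact_gt0.
transitivity (d%:R * ((N + d - 1) * \prod_(k < N.-1) (d + k))%N%:R /
              ('C(N + d - 1, N) * N * (N.-1)`!)%N%:R : R).
  by rewrite !natrM; field; rewrite C_neq0 N_neq0 F_neq0.
rewrite rising mulfK // pnatr_eq0 -lt0n !muln_gt0 fact_gt0 N_gt0.
by rewrite bin_gt0 -addnBA ?leq_addr.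
Qed.

Theorem mainTheorem14 (R : realFieldType) (d N : nat) (beta : 'I_N -> R) :
  (2 <= d)%N -> (1 <= N)%N ->
  (d%:R - 1) * (\sum_(i < N) beta i ^+ 2) + (\sum_(i < N) beta i) ^+ 2 = 1 ->
  forall i : 'I_N,
    (forall y x : basis d N,
       opmul (Ctilde d beta) (omega0 (fac i)) y x =
       \sum_(a < N) \sum_(s : {perm 'I_N.+1} | inSigma s (fac a) (fac i))
          ((N.-1)`!%:R)^-1 *
          (beta a * ((d%:R - 1) * beta i + \sum_(b < N) beta b)) * PiG s y x)
    /\
    optr (opmul (Cbeta d beta) (omega0 (fac i))) =
      d%:R * ((d%:R - 1) * beta i + \sum_(j < N) beta j) ^+ 2.
Proof.
move=> d_ge2 N_gt0 _ i; have d_gt0 : (0 < d)%N by apply: leq_trans d_ge2.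
split=> [y x|]; first exact: Ctilde_omega0E.
have -> : optr (opmul (Cbeta d beta) (omega0 (fac i))) =
    d%:R / 'C(N + d - 1, N)%:R * ((N + d - 1)%:R / N%:R) *
    optr (opmul (Ctilde d beta) (omega0 (fac i))).
  rewrite /optr /opmul mulr_sumr; apply: eq_bigr => x _.
  by rewrite mulr_sumr; apply: eq_bigr => z _; rewrite /Cbeta; ring.
by rewrite optr_Ctilde_omega0 // mulrA Cbeta_normalization.
Qed.
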